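(* Let $q$ be a prime power, $n\ge1$, and let $k$ be an integer with $n(q-1)-\frac{q-1}{2}<k\le n(q-1)$. Put $\ell=n(q-1)-k$. Then \[\dim(\operatorname{Hull}(C_{n,k}^q))=\dim(C_{n,\ell}^q)-1=\binom{n+\ell}{\ell}-1.\]
   Context: For a prime power $q$ and integers $n\ge 1$, $k\ge 0$, the projective Reed-Muller code $C_{n,k}^q\subseteq \mathbb{F}_q^N$, $N=\frac{q^{n+1}-1}{q-1}$, is defined as follows. For each point of $\mathbb{P}^n(\mathbb{F}_q)$ choose the affine representative $(p_0,\dots,p_n)\in\mathbb{F}_q^{n+1}\setminus\{0\}$ whose left-most nonzero coordinate equals $1$, and fix an ordering $P_1',\dots,P_N'$ of these representatives. Then $C_{n,k}^q=\{(F(P_1'),\dots,F(P_N')) : F\in \mathbb{F}_q[x_0,\dots,x_n]_k\}$, where $\mathbb{F}_q[x_0,\dots,x_n]_k$ is the space of homogeneous polynomials of degree $k$ together with $0$ (so $C_{n,0}^q$ is spanned by the all-ones vector). Duals are with respect to the standard dot product, and $\operatorname{Hull}(C)=C\cap C^\perp$. *)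

From HB Require Import structures.
From mathcomp Require Import all_boot all_order all_algebra all_field.
From mathcomp Require Import mpoly.
From Stdlib Require Import ClassicalEpsilon.

Set Implicit Arguments.
Unset Strict Implicit.
Unset Printing Implicit Defensive.

Import GRing.Theory.
Local Open Scope ring_scope.

Section ProjRM.
Variable F : finFieldType.
Variable n : nat. (* projective dimension; coordinates x_0 .. x_n *)

(* affine representative whose left-most nonzero coordinate equals 1 *)
Definition normalized_rep (v : 'rV[F]_(n.+1)) : bool :=
  [exists i : 'I_(n.+1),
     (v 0 i == 1) && [forall j : 'I_(n.+1), (j < i)%N ==> (v 0 j == 0)]].

Definition proj_points : {set 'rV[F]_(n.+1)} := [set v | normalized_rep v].

Definition Npts : nat := #|proj_points|.

Definition point (i : 'I_Npts) : 'rV[F]_(n.+1) := enum_val i.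

Definition eval_vec (P : {mpoly F[n.+1]}) : 'rV[F]_Npts :=
  \row_(i < Npts) P.@[fun j => point i 0 j].

(* membership in C_{n,k}^q : evaluation vector of a homogeneous polynomial of
   degree k or of 0 (0 is k.-homog in mpoly) *)
Definition in_PRM (k : nat) (c : 'rV[F]_Npts) : bool :=
  if excluded_middle_informative
       (exists P : {mpoly F[n.+1]}, P \is k.-homog /\ eval_vec P = c)
  then true else false.

Definition PRM (k : nat) : {vspace 'rV[F]_Npts} :=
  <<[seq c <- enum 'rV[F]_Npts | in_PRM k c]>>%VS.

Definition dotp (u v : 'rV[F]_Npts) : F := \sum_(i < Npts) u 0 i * v 0 i.

Definition dual_code (C : {vspace 'rV[F]_Npts}) : {vspace 'rV[F]_Npts} :=
  <<[seq v <- enum 'rV[F]_Npts |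
       [forall c : 'rV[F]_Npts, (c \in C) ==> (dotp c v == 0%R)]]>>%VS.

Definition hull (C : {vspace 'rV[F]_Npts}) : {vspace 'rV[F]_Npts} :=
  (C :&: dual_code C)%VS.

End ProjRM.

From HB Require Import structures.
From mathcomp Require Import all_boot all_order all_algebra all_field.
From mathcomp Require Import fingroup cyclic mpoly.
From mathcomp Require Import zify ring.
From Stdlib Require Import ClassicalEpsilon.
Set Implicit Arguments. Unset Strict Implicit. Unset Printing Implicit Defensive.
Import GRing.Theory.
Local Open Scope ring_scope.

(* Put l = n(q - 1) - k, so that 2l < q - 1. Summing a form over the projective
   points reduces to products of power sums \sum_x x^e, which vanish unless e is
   a positive multiple of q - 1. Hence C_{n,l} is orthogonal to C_{n,k}, and
   pairing x^s with x^((q - 1) - t) for exponent vectors s, t of degree l gives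
   (-1)^n [s = t], so the monomials of degree l form a basis of C_{n,l}. Each of
   them except x_n^l also lies in C_{n,k}: multiply it by a form of degree k - l
   equal to 1 wherever the monomial is nonzero. This gives dim Hull >= C(n+l,l) - 1.
   Conversely, expanding the indicator functions of points in monomials shows that
   F^N = C_{n,k} + span {x^((q - 1) - t)}, so dim C_{n,k}^perp <= C(n+l,l); and
   x_n^l lies in C_{n,k}^perp without being self-orthogonal, so the hull is a
   proper subspace of C_{n,k}^perp. *)

Section FiniteField.
Variable F : finFieldType.
Local Notation q := #|F|.

Lemma natr_card : q%:R = 0 :> F.
Proof.
(* Lagrange's theorem in the additive group of F. *)
have := @expg_cardG _ (setT_group F) (GRing.one F) (in_setT _).
by rewrite cardsT.
Qed.

Lemma card_sub1_gt0 : (0 < q - 1)%N.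
Proof. by rewrite subn_gt0 finNzRing_gt1. Qed.

Lemma natr_card_sub1 : (q - 1)%:R = -1 :> F.
Proof.
apply/eqP; rewrite -subr_eq0 opprK natr1 -addn1 subnK ?natr_card //.
exact: ltnW (finNzRing_gt1 F).
Qed.

Lemma expf_card_sub1 (x : F) : x != 0 -> x ^+ (q - 1) = 1.
Proof.
move=> x0; apply: (mulfI x0); rewrite mulr1 -exprS subn1 prednK ?expf_card //.
exact: ltnW (finNzRing_gt1 F).
Qed.

Lemma expf_modn_card_sub1 (x : F) e : x != 0 -> x ^+ e = x ^+ (e %% (q - 1)).
Proof.
move=> x0; rewrite {1}(divn_eq e (q - 1)) exprD mulnC exprM.
by rewrite expf_card_sub1 // expr1n mul1r.
Qed.

Lemma expfD_mul_card_sub1 (x : F) e r :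
  (0 < e)%N -> x ^+ (e + r * (q - 1)) = x ^+ e.
Proof.
move=> e0; have [->|x0] := eqVneq x 0; first by rewrite !expr0n addn_eq0 eqn0Ngt e0.
by rewrite exprD mulnC exprM expf_card_sub1 // expr1n mulr1.
Qed.

Lemma card_nonzero : #|[pred x : F | x != 0]| = (q - 1)%N.
Proof. by rewrite subn1 -(cardC1 (0 : F)); apply: eq_card. Qed.

Lemma exists_nonroot_pow r : (0 < r)%N -> (r < q - 1)%N ->
  exists2 x : F, x != 0 & x ^+ r != 1.
Proof.
move=> r0 rq; apply/exists_inP; apply: contraT; rewrite negb_exists_in => /forall_inP roots.
have := @max_poly_roots F ('X^r - 1) (enum [pred x : F | x != 0]).
rewrite -size_poly_eq0 size_XnsubC // enum_uniq -cardE card_nonzero.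
have -> : all (root ('X^r - 1)) (enum [pred x : F | x != 0]).
  apply/allP => x; rewrite mem_enum => x0.
  by rewrite rootE !hornerE subr_eq0; apply/negPn/roots.
by move=> /(_ isT isT isT); lia.
Qed.

Lemma sum_nonzero_pow e :
  \sum_(x : F | x != 0) x ^+ e = if (q - 1 %| e)%N then -1 else 0.
Proof.
case: ifP => [dv|ndv].
  rewrite (eq_bigr (fun _ => 1)) => [|x x0]; last first.
    by rewrite -(divnK dv) mulnC exprM expf_card_sub1 // expr1n.
  by rewrite sumr_const card_nonzero natr_card_sub1.
set r := (e %% (q - 1))%N.
have r0 : (0 < r)%N by rewrite lt0n /r -/(dvdn _ _) ndv.
have [mu mu0 mur] := exists_nonroot_pow r0 (ltn_pmod _ card_sub1_gt0).
rewrite (eq_bigr (fun x => x ^+ r)) => [|x x0]; last exact: expf_modn_card_sub1.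
set S := \sum_(x | x != 0) x ^+ r.
(* the sum is invariant under the substitution x := mu x *)
have : S = mu ^+ r * S.
  rewrite {1}/S (reindex_inj (mulfI mu0)) /= mulr_sumr; apply: eq_big => x.
    by rewrite mulf_eq0 (negbTE mu0).
  by rewrite exprMn.
move/eqP; rewrite -subr_eq0 -{1}[S]mul1r -mulrBl mulf_eq0 subr_eq0 eq_sym.
by rewrite (negbTE mur) => /eqP.
Qed.

Definition power_sum e := \sum_(x : F) x ^+ e.

Lemma power_sumE e : power_sum e = if (0 < e)%N && (q - 1 %| e)%N then -1 else 0.
Proof.
rewrite /power_sum (bigD1 0) //=; case: e => [|e] /=; last first.
  by rewrite expr0n add0r sum_nonzero_pow.
rewrite expr0 (eq_bigr (fun _ => 1)) // sumr_const card_nonzero natr_card_sub1.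
by rewrite addrN.
Qed.

Lemma power_sum_small e : (e < q - 1)%N -> power_sum e = 0.
Proof.
move=> eq; rewrite power_sumE; case: e eq => //= e eq.
by rewrite gtnNdvd.
Qed.

End FiniteField.

Lemma span_ind (K : fieldType) (V : vectType K) (P : V -> Prop) (X : seq V) :
  P 0 -> (forall a u v, P u -> P v -> P (a *: u + v)) ->
  (forall u, u \in X -> P u) -> forall v, v \in <<X>>%VS -> P v.
Proof.
move=> P0 PD; elim: X => [|x X IH] PX v.
  by rewrite span_nil memv0 => /eqP ->.
rewrite span_cons => /memv_addP [y /vlineP [a ->] [z zX ->]].
apply: PD; first by apply: PX; rewrite mem_head.
by apply: IH => // w wX; apply: PX; rewrite in_cons wX orbT.
Qed.

Section ProjectivePoints.
Variables (F : finFieldType) (n : nat).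
Local Notation q := #|F|.
Local Notation vec := 'rV[F]_n.+1.
Local Notation reps := (proj_points F n).

Definition mono (c : 'I_n.+1 -> nat) (v : vec) : F := \prod_i v 0 i ^+ c i.

Lemma sum_mono c : \sum_(v : vec) mono c v = \prod_i power_sum F (c i).
Proof.
rewrite /power_sum bigA_distr_bigA /=.
rewrite [RHS](reindex (fun v : vec => [ffun i => v 0 i])) /=.
  by apply: eq_bigr => v _; apply: eq_bigr => i _; rewrite ffunE.
exists (fun f => \row_i f i) => [v _|f _].
  by apply/rowP => i; rewrite !mxE ffunE.
by apply/ffunP => i; rewrite ffunE mxE.
Qed.

Lemma monoZ a c v : mono c (a *: v) = a ^+ (\sum_i c i) * mono c v.
Proof.
rewrite /mono (eq_bigr (fun i => a ^+ c i * v 0 i ^+ c i)) => [|i _]; last first.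
  by rewrite mxE exprMn.
by rewrite big_split /= prodrXr.
Qed.

Lemma mono0 c : (0 < \sum_i c i)%N -> mono c 0 = 0.
Proof.
rewrite lt0n sum_nat_eq0 negb_forall => /existsP[i]; rewrite implyTb => ci.
by rewrite /mono (bigD1 i) //= mxE expr0n (negbTE ci) mul0r.
Qed.

Lemma mono_eq0 c (v : vec) i : (0 < c i)%N -> v 0 i = 0 -> mono c v = 0.
Proof. by move=> ci vi; rewrite /mono (bigD1 i) //= vi expr0n eqn0Ngt ci mul0r. Qed.

Definition is_lead (v : vec) (i : 'I_n.+1) :=
  (v 0 i != 0) && [forall j : 'I_n.+1, (j < i)%N ==> (v 0 j == 0)].

Lemma is_lead_uniq v i j : is_lead v i -> is_lead v j -> i = j.
Proof.
move=> /andP[vi /forallP Hi] /andP[vj /forallP Hj].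
case: (ltngtP i j) => [ij|ji|/val_inj //].
  by have := Hj i; rewrite ij /= (negbTE vi).
by have := Hi j; rewrite ji /= (negbTE vj).
Qed.

Lemma exists_lead v : v != 0 -> exists i, is_lead v i.
Proof.
move=> v0; have [i vi] : exists i, v 0 i != 0.
  apply/existsP; apply: contraR v0; rewrite negb_exists => /forallP H.
  by apply/eqP/rowP => i; rewrite mxE; apply/eqP/negPn.
pose P m := (m < n.+1)%N && (v 0 (inord m) != 0).
have Pi : exists m, P m by exists i; rewrite /P ltn_ord inord_val.
case: (ex_minnP Pi) => m /andP[mn vm] Hm.
exists (inord m); rewrite /is_lead vm /=; apply/forallP => j; apply/implyP => jm.
apply: contraTT jm => vj; have := Hm j; rewrite /P ltn_ord inord_val vj => /(_ isT).
by rewrite inordK // -leqNgt.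
Qed.

Lemma is_leadZ a v i : a != 0 -> is_lead (a *: v) i = is_lead v i.
Proof.
move=> a0; rewrite /is_lead mxE mulf_eq0 (negbTE a0) /=; congr (_ && _).
by apply: eq_forallb => j; rewrite mxE mulf_eq0 (negbTE a0).
Qed.

Definition lead_coord (v : vec) : F :=
  if [pick i | is_lead v i] is Some i then v 0 i else 1.

Lemma lead_coordE v i : is_lead v i -> lead_coord v = v 0 i.
Proof.
move=> Li; rewrite /lead_coord; case: pickP => [j Lj|/(_ i)]; last by rewrite Li.
by rewrite (is_lead_uniq Lj Li).
Qed.

Lemma proj_pointsP v : (v \in reps) = [exists i, is_lead v i && (v 0 i == 1)].
Proof.
rewrite inE /normalized_rep; apply: eq_existsb => i; rewrite /is_lead.
by case: eqP => [->|_]; rewrite ?oner_neq0 ?andbT ?andbF.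
Qed.

Lemma proj_point_lead P : P \in reps -> exists2 i, is_lead P i & P 0 i = 1.
Proof. by rewrite proj_pointsP => /existsP[i /andP[Li /eqP Pi]]; exists i. Qed.

Lemma lead_coord_proj P : P \in reps -> lead_coord P = 1.
Proof. by case/proj_point_lead => i Li Pi; rewrite (lead_coordE Li). Qed.

Lemma proj_point_neq0 P : P \in reps -> P != 0.
Proof.
by case/proj_point_lead => i _ Pi; apply: contra_eq_neq Pi => ->; rewrite mxE eq_sym oner_neq0.
Qed.

Lemma lead_coord_neq0 v : v != 0 -> lead_coord v != 0.
Proof. by case/exists_lead => i Li; rewrite (lead_coordE Li); case/andP: Li. Qed.

Lemma lead_coordZ a v : a != 0 -> v != 0 -> lead_coord (a *: v) = a * lead_coord v.
Proof.
move=> a0 /exists_lead [i Li]; rewrite (lead_coordE Li) (@lead_coordE _ i) ?mxE //.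
by rewrite is_leadZ.
Qed.

Definition normalize (v : vec) := (lead_coord v)^-1 *: v.

Lemma normalize_proj v : v != 0 -> normalize v \in reps.
Proof.
move=> v0; have [i Li] := exists_lead v0.
rewrite proj_pointsP; apply/existsP; exists i.
rewrite is_leadZ ?invr_eq0 ?lead_coord_neq0 // Li /= mxE (lead_coordE Li) mulVf //.
by case/andP: Li.
Qed.

Lemma normalizeZ P a : P \in reps -> a != 0 -> normalize (a *: P) = P.
Proof.
move=> Pr a0; rewrite /normalize lead_coordZ ?proj_point_neq0 // lead_coord_proj //.
by rewrite mulr1 scalerA mulVf // scale1r.
Qed.

Lemma normalizeK v : v != 0 -> lead_coord v *: normalize v = v.
Proof. by move=> v0; rewrite /normalize scalerA divff ?lead_coord_neq0 // scale1r. Qed.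

(* (normalize, lead_coord) inverts (P, a) |-> a *: P on nonzero vectors. *)
Lemma sum_vec_by_lines (phi : vec -> F) :
  \sum_(v : vec) phi v =
  phi 0 + \sum_(P in reps) \sum_(a : F | a != 0) phi (a *: P).
Proof.
rewrite (bigD1 0) //=; congr (_ + _); rewrite pair_big_dep /=.
rewrite (reindex_onto (fun p : vec * F => p.2 *: p.1)
                      (fun v => (normalize v, lead_coord v))) /=; last first.
  by move=> v v0; rewrite normalizeK.
apply: eq_bigl => -[P a] /=; apply/idP/idP.
  case/andP => aP0 /eqP [<- _].
  have a0 : a != 0 by apply: contraNneq aP0 => ->; rewrite scale0r.
  by rewrite a0 andbT normalize_proj.
case/andP => Pr a0.
rewrite scaler_eq0 negb_or a0 proj_point_neq0 //= normalizeZ //.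
by rewrite lead_coordZ ?proj_point_neq0 // lead_coord_proj // mulr1.
Qed.

Lemma sum_proj_mono c : (q - 1 %| \sum_i c i)%N -> (0 < \sum_i c i)%N ->
  \sum_(P in reps) mono c P = - \prod_i power_sum F (c i).
Proof.
move=> dv c0; have := sum_vec_by_lines (mono c).
rewrite sum_mono mono0 // add0r => ->; rewrite -sumrN; apply: eq_bigr => P _.
under eq_bigr do rewrite monoZ.
by rewrite -mulr_suml sum_nonzero_pow dv mulN1r opprK.
Qed.

Lemma natr_card_proj : #|reps|%:R = 1 :> F.
Proof.
have mono_const v : mono (fun _ => 0%N) v = 1.
  by rewrite /mono big1 // => i _; rewrite expr0.
have := sum_vec_by_lines (mono (fun _ => 0%N)).
rewrite sum_mono big_ord_recl power_sumE /= mul0r mono_const.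
under eq_bigr do under eq_bigr do rewrite mono_const.
rewrite (eq_bigr (fun _ => -1)) => [|P _]; last first.
  by rewrite sumr_const card_nonzero natr_card_sub1.
by rewrite sumr_const mulNrn => /eqP; rewrite eq_sym addr_eq0 opprK => /eqP <-.
Qed.

End ProjectivePoints.

Section BasisMatrix.
Variables (K : fieldType) (m : nat) (U : {vspace 'rV[K]_m}).

Definition vbasis_mx : 'M[K]_(\dim U, m) := \matrix_(i, j) tnth (vbasis U) i 0 j.

Lemma row_vbasis_mx i : row i vbasis_mx = tnth (vbasis U) i.
Proof. by apply/rowP => j; rewrite !mxE. Qed.

Lemma row_free_vbasis_mx : row_free vbasis_mx.
Proof.
apply/inj_row_free => x; rewrite mulmx_sum_row => x0.
have /freeP free_basis := basis_free (vbasisP U).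
apply/rowP => i; rewrite mxE; apply: (free_basis (fun i => x 0 i)).
by rewrite -[RHS]x0; apply: eq_bigr => j _; rewrite row_vbasis_mx (tnth_nth 0).
Qed.

End BasisMatrix.

Section Codes.
Variables (F : finFieldType) (n : nat).
Local Notation q := #|F|.
Local Notation vec := 'rV[F]_n.+1.
Local Notation reps := (proj_points F n).
Local Notation N := (Npts F n).
Local Notation ev := (@eval_vec F n).
Local Notation pt := (@point F n).

Lemma sum_points (g : vec -> F) : \sum_(i < N) g (pt i) = \sum_(P in reps) g P.
Proof. by rewrite [RHS]big_enum_val. Qed.

Lemma point_proj i : pt i \in reps.
Proof. exact: enum_valP. Qed.

Lemma eval_vecD P Q : ev (P + Q) = ev P + ev Q.
Proof. by apply/rowP => i; rewrite !mxE mevalD. Qed.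

Lemma eval_vecZ a P : ev (a *: P) = a *: ev P.
Proof. by apply/rowP => i; rewrite !mxE mevalZ. Qed.

Lemma eval_vec0 : ev 0 = 0.
Proof. by apply/rowP => i; rewrite !mxE meval0. Qed.

Definition mono_vec (c : 'I_n.+1 -> nat) : 'rV[F]_N := \row_i mono c (pt i).

Lemma eq_mono_vec c c' : c =1 c' -> mono_vec c = mono_vec c'.
Proof. by move=> cc'; apply/rowP => i; rewrite !mxE; apply: eq_bigr => j _; rewrite cc'. Qed.

Lemma eval_vecX (m : 'X_{1..n.+1}) : ev 'X_[m] = mono_vec m.
Proof. by apply/rowP => i; rewrite !mxE mevalX. Qed.

Lemma dotpDr (c : 'rV[F]_N) a u v : dotp c (a *: u + v) = a * dotp c u + dotp c v.
Proof.
rewrite /dotp mulr_sumr -big_split; apply: eq_bigr => i _.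
by rewrite !mxE mulrDr mulrCA.
Qed.

Lemma dotp_suml (I : finType) (a : I -> F) (x : I -> 'rV[F]_N) z :
  dotp (\sum_i a i *: x i) z = \sum_i a i * dotp (x i) z.
Proof.
rewrite /dotp; under eq_bigr do rewrite summxE mulr_suml.
rewrite exchange_big; apply: eq_bigr => i _; rewrite mulr_sumr.
by apply: eq_bigr => j _; rewrite mxE mulrA.
Qed.

Lemma dotp_eval_vec P Q :
  dotp (ev P) (ev Q) = \sum_(x in reps) (P * Q).@[fun j => x 0 j].
Proof.
rewrite /dotp -(sum_points (fun x => (P * Q).@[fun j => x 0 j])).
by apply: eq_bigr => i _; rewrite !mxE mevalM.
Qed.

Lemma dotp_mono_vec a b :
  dotp (mono_vec a) (mono_vec b) = \sum_(x in reps) mono (fun i => a i + b i)%N x.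
Proof.
rewrite /dotp -sum_points; apply: eq_bigr => i _; rewrite !mxE /mono -big_split.
by apply: eq_bigr => j _; rewrite exprD.
Qed.

Lemma PRMP k c :
  reflect (exists2 P, P \is k.-homog & ev P = c) (c \in PRM F n k).
Proof.
apply: (iffP idP) => [|[P hP <-]]; last first.
  apply: memv_span; rewrite mem_filter mem_enum andbT /in_PRM.
  by case: excluded_middle_informative => // -[]; exists P.
move: c; apply: (span_ind (P := fun c => exists2 P, P \is k.-homog & ev P = c))
  => [|a u v [P hP <-] [Q hQ <-]|u].
- by exists 0; rewrite ?eval_vec0 ?rpred0.
- by exists (a *: P + Q); rewrite ?eval_vecD ?eval_vecZ // rpredD ?rpredZ.
- rewrite mem_filter /in_PRM; case: excluded_middle_informative => //.
  by case=> P [hP eP] _; exists P.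
Qed.

Lemma dual_codeP (C : {vspace 'rV[F]_N}) u :
  reflect (forall c, c \in C -> dotp c u = 0) (u \in dual_code C).
Proof.
apply: (iffP idP) => [uD c cC|uC]; last first.
  apply: memv_span; rewrite mem_filter mem_enum andbT.
  by apply/forall_inP => c /uC ->.
move: u uD; apply: (span_ind (P := fun u => dotp c u = 0)) => [|a u v cu cv|u].
- by rewrite /dotp big1 // => i _; rewrite mxE mulr0.
- by rewrite dotpDr cu cv mulr0 addr0.
- by rewrite mem_filter => /andP[/forall_inP /(_ c cC) /eqP].
Qed.

(* The basis matrix of the dual code lies in the kernel of the transposed one of C. *)
Lemma dim_dual_code (C : {vspace 'rV[F]_N}) : (\dim (dual_code C) + \dim C <= N)%N.
Proof.
set D := dual_code C; set B := vbasis_mx C; set U := vbasis_mx D.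
have UB : U *m B^T = 0.
  apply/matrixP => i j; rewrite !mxE.
  have uD : tnth (vbasis D) i \in D by apply/vbasis_mem/mem_tnth.
  have bC : tnth (vbasis C) j \in C by apply/vbasis_mem/mem_tnth.
  rewrite -[RHS]((dual_codeP _ _ uD) _ bC); apply: eq_bigr => k _.
  by rewrite !mxE mulrC.
have := mxrankS (introT sub_kermxP UB).
rewrite mxrank_ker mxrank_tr !(eqP (row_free_vbasis_mx _)).
have := rank_leq_col B; rewrite (eqP (row_free_vbasis_mx _)) => le_CN.
by rewrite -(leq_add2r (\dim C)) subnK.
Qed.

Lemma sum_proj_homog (R : {mpoly F[n.+1]}) d :
  R \is d.-homog -> (q - 1 %| d)%N -> (0 < d)%N ->
  \sum_(x in reps) R.@[fun j => x 0 j] =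
  - \sum_(m <- msupp R) R@_m * \prod_i power_sum F (m i).
Proof.
move=> hR dv d0; under eq_bigr do rewrite mevalE.
rewrite exchange_big /= -sumrN big_seq [RHS]big_seq; apply: eq_bigr => m mR.
rewrite -mulr_sumr -mulrN; congr (_ * _).
have md : (\sum_i m i)%N = d by rewrite -mdegE; apply: (dhomog_mf hR).
by rewrite sum_proj_mono ?md.
Qed.

(* A monomial of degree n(q - 1) in n + 1 variables has an exponent below q - 1. *)
Lemma dotp_eval_homog_eq0 (P Q : {mpoly F[n.+1]}) d1 d2 :
  (0 < n)%N -> P \is d1.-homog -> Q \is d2.-homog -> (d1 + d2 = n * (q - 1))%N ->
  dotp (ev P) (ev Q) = 0.
Proof.
move=> n0 hP hQ hd; have hPQ := dhomogM hP hQ; rewrite dotp_eval_vec.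
rewrite (sum_proj_homog hPQ) ?hd ?dvdn_mull ?muln_gt0 ?n0 ?card_sub1_gt0 //.
rewrite big_seq big1 ?oppr0 // => m mR.
have md : (\sum_i m i = n * (q - 1))%N by rewrite -mdegE -hd; apply: dhomog_mf mR.
have [i mi] : exists i, (m i < q - 1)%N.
  apply/existsP; apply: contraT; rewrite negb_exists => /forallP mge.
  have : (\sum_(i < n.+1) (q - 1) <= \sum_i m i)%N.
    by apply: leq_sum => i _; rewrite leqNgt mge.
  rewrite md sum_nat_const card_ord; have := card_sub1_gt0 F; lia.
by rewrite (bigD1 i) //= power_sum_small // mul0r mulr0.
Qed.

Lemma mono_vec_lift_in_PRM k c j : (0 < c j)%N -> (\sum_i c i <= k)%N ->
  (q - 1 %| k - \sum_i c i)%N -> mono_vec c \in PRM F n k.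
Proof.
set s := (\sum_i c i)%N => cj sk dk.
pose m := [multinom (if i == j then c j + (k - s) else c i)%N | i < n.+1].
apply/PRMP; exists 'X_[m].
  rewrite dhomogX; apply/eqP; transitivity (mdeg m) => //.
  rewrite mdegE (bigD1 j) //= mnmE eqxx.
  rewrite (eq_bigr c) => [|i /negbTE ij]; last by rewrite mnmE ij.
  by move: sk; rewrite /s (bigD1 j) //=; lia.
rewrite eval_vecX; apply/rowP => x; rewrite !mxE; apply: eq_bigr => i _.
by rewrite mnmE; case: eqP => [->|//]; rewrite -(divnK dk) expfD_mul_card_sub1.
Qed.

End Codes.

Lemma ord_neq_max_lt m (j : 'I_m.+1) : j != ord_max -> (j < m)%N.
Proof.
by rewrite ltn_neqAle -ltnS ltn_ord andbT; apply: contra => /eqP jm; apply/eqP/val_inj.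
Qed.

Section Indicators.
Variables (F : finFieldType) (n : nat).
Local Notation q := #|F|.
Local Notation vec := 'rV[F]_n.+1.
Local Notation reps := (proj_points F n).
Local Notation mv := (@mono_vec F n).
Local Notation pt := (@point F n).

Lemma dhomog_prod_ord m (g : 'I_m -> {mpoly F[n.+1]}) d :
  (forall i, g i \is d.-homog) -> \prod_(i < m) g i \is (d * m).-homog.
Proof.
elim: m g => [|m IH] g hg; first by rewrite big_ord0 muln0 dhomog1.
by rewrite big_ord_recr /= mulnS addnC; apply: dhomogM => //; apply: IH.
Qed.

Lemma dhomogXn (t : 'I_n.+1) e : ('X_t ^+ e : {mpoly F[n.+1]}) \is e.-homog.
Proof.
suff hX : ('X_t : {mpoly F[n.+1]}) \is 1.-homog by have := dhomogMn e hX; rewrite mul1n.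
by rewrite dhomogX; apply/eqP; apply: mdeg1.
Qed.

(* On a projective point P with P_j != 0 and leading index s <= j, only the
   t = s summand survives, and it equals 1. *)
Definition lead_indicator (j : 'I_n.+1) (e : nat) : {mpoly F[n.+1]} :=
  \sum_(t : 'I_n.+1 | (t <= j)%N) 'X_t ^+ (e + (j - t) * (q - 1)) *
     \prod_(i : 'I_n.+1 | (i < t)%N) ('X_t ^+ (q - 1) - 'X_i ^+ (q - 1)).

Lemma lead_indicator_homog j e : lead_indicator j e \is (e + j * (q - 1)).-homog.
Proof.
apply: rpred_sum => t tj.
have -> : (e + j * (q - 1) = e + (j - t) * (q - 1) + (q - 1) * t)%N.
  by rewrite -addnA [((q - 1) * _)%N]mulnC -mulnDl subnK.
apply: dhomogM; first exact: dhomogXn.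
rewrite (big_ord_narrow (ltnW (ltn_ord t))); apply: dhomog_prod_ord => i.
by apply: rpredB; apply: dhomogXn.
Qed.

Lemma lead_indicator_eval j e (P : vec) : (0 < e)%N -> P \in reps -> P 0 j != 0 ->
  (lead_indicator j e).@[fun i => P 0 i] = 1.
Proof.
move=> e0 Pr Pj; case/proj_point_lead: Pr => s /andP[_ /forall_inP Ls] Ps1.
have Ps0 (i : 'I_n.+1) : (i < s)%N -> P 0 i = 0 by move=> /Ls /eqP.
have Pe0 (i : 'I_n.+1) r : P 0 i = 0 -> P 0 i ^+ (e + r) = 0.
  by move=> ->; rewrite expr0n addn_eq0 eqn0Ngt e0.
have sj : (s <= j)%N by case: leqP => // /Ps0 Pj0; move: Pj; rewrite Pj0 eqxx.
rewrite /lead_indicator rmorph_sum /= (bigD1 s) //= [X in _ + X]big1 ?addr0.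
  rewrite rmorphM rmorphXn /= mevalXU Ps1 expr1n mul1r rmorph_prod big1 // => i si.
  rewrite rmorphB !rmorphXn /= !mevalXU Ps1 Ps0 // expr1n.
  by rewrite expr0n eqn0Ngt card_sub1_gt0 subr0.
move=> t /andP[tj ts]; rewrite rmorphM rmorphXn /= mevalXU.
case: (ltngtP t s) ts => [/Ps0/Pe0 -> _|st _|/val_inj ->]; last by rewrite eqxx.
  by rewrite mul0r.
have [/Pe0 -> |Pt0] := eqVneq (P 0 t) 0; first by rewrite mul0r.
rewrite rmorph_prod (bigD1 s) //= rmorphB !rmorphXn /= !mevalXU Ps1 expr1n.
by rewrite expf_card_sub1 // subrr mul0r mulr0.
Qed.

Local Notation J := 'I_((q - 1).+2).

(* delta_coef c r is the coefficient of x ^+ (q - 1 - r) in 1 - (x - c) ^+ (q - 1);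
   the extra index ord_max carries the constant 1. *)
Definition delta_coef (c : F) (r : J) : F :=
  if r == ord_max then 1 else - ((- c) ^+ r *+ 'C(q - 1, r)).

Lemma delta_coefE (c x : F) :
  1 - (x - c) ^+ (q - 1) = \sum_(r : J) delta_coef c r * x ^+ (q - 1 - r).
Proof.
rewrite big_ord_recr /= /delta_coef eqxx mul1r.
have -> : (q - 1 - (q - 1).+1 = 0)%N by rewrite subnS subnn.
rewrite expr0 addrC.
congr (_ + _); rewrite exprDn -sumrN; apply: eq_bigr => i _.
have /negbTE -> : widen_ord (leqnSn _) i != ord_max by rewrite neq_ltn /= ltn_ord.
by rewrite mulNr mulrC -mulrnAl.
Qed.

Definition indicator_coef (P0 : vec) (f : {ffun 'I_n.+1 -> J}) : F :=
  \prod_i delta_coef (P0 0 i) (f i).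

Definition indicator_exps (f : {ffun 'I_n.+1 -> J}) i := (q - 1 - f i)%N.

Lemma indicator_expand (P0 v : vec) : (v == P0)%:R =
  \sum_(f : {ffun 'I_n.+1 -> J}) indicator_coef P0 f * mono (indicator_exps f) v.
Proof.
transitivity (\prod_i (1 - (v 0 i - P0 0 i) ^+ (q - 1))).
  case: eqP => [->|/eqP vP].
    by rewrite big1 // => i _; rewrite subrr expr0n eqn0Ngt card_sub1_gt0 subr0.
  have [i vi] : exists i, v 0 i != P0 0 i.
    apply/existsP; apply: contraR vP; rewrite negb_exists => /forallP vP.
    by apply/eqP/rowP => i; apply/eqP/negPn.
  by rewrite (bigD1 i) //= expf_card_sub1 ?subr_eq0 // subrr mul0r.
under eq_bigr do rewrite delta_coefE.
by rewrite bigA_distr_bigA /=; apply: eq_bigr => f _; rewrite big_split.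
Qed.

(* Averaging the affine expansion over the line through P against a ^+ l keeps
   only the exponent vectors of total degree congruent to -l. *)
Lemma proj_indicator_expand (P0 P : vec) (l : nat) : P0 \in reps -> P \in reps ->
  (P == P0)%:R = \sum_(f : {ffun 'I_n.+1 -> J})
     (indicator_coef P0 f *
      (if (q - 1 %| l + \sum_i indicator_exps f i)%N then -1 else 0)) *
     mono (indicator_exps f) P.
Proof.
move=> P0r Pr.
transitivity (\sum_(a : F | a != 0) a ^+ l * ((a *: P) == P0)%:R).
  case: eqP => [->|/eqP nP].
    rewrite (bigD1 1) ?oner_neq0 //= expr1n scale1r eqxx mul1r big1 ?addr0 //.
    move=> a /andP[a0 a1]; case: eqP => [aP|]; last by rewrite mulr0.
    move: a1; have := congr1 (@lead_coord _ _) aP.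
    by rewrite lead_coordZ ?proj_point_neq0 // !lead_coord_proj // mulr1 => ->; rewrite eqxx.
  rewrite big1 // => a a0; case: eqP => [aP|]; last by rewrite mulr0.
  have nP0 : normalize P0 = P0 by rewrite -{1}[P0]scale1r normalizeZ ?oner_neq0.
  have := congr1 (@normalize _ _) aP; rewrite normalizeZ // nP0 => PP0.
  by rewrite PP0 eqxx in nP.
under eq_bigr do rewrite indicator_expand mulr_sumr.
rewrite exchange_big /=; apply: eq_bigr => f _.
set c := indicator_exps f.
rewrite (eq_bigr (fun a => a ^+ (l + \sum_i c i) * (indicator_coef P0 f * mono c P)))
  => [|a _]; last by rewrite monoZ exprD; ring.
by rewrite -mulr_suml sum_nonzero_pow; case: ifP => _; ring.
Qed.

Lemma indicator_exps_le f i : (indicator_exps f i <= q - 1)%N.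
Proof. exact: leq_subr. Qed.

Definition ffun_max : {ffun 'I_n.+1 -> J} := [ffun _ => ord_max].

Lemma indicator_coef_max P0 : indicator_coef P0 ffun_max = 1.
Proof. by rewrite /indicator_coef big1 // => i _; rewrite ffunE /delta_coef eqxx. Qed.

Lemma indicator_exps_max i : indicator_exps ffun_max i = 0%N.
Proof. by rewrite /indicator_exps ffunE /= subnS subnn. Qed.

Lemma indicator_coef0_support f i :
  indicator_coef 0 f != 0 -> (f i == ord_max) || (f i == 0 :> nat).
Proof.
apply: contraR; rewrite negb_or => /andP[fm f0].
rewrite /indicator_coef (bigD1 i) //= /delta_coef (negbTE fm) mxE oppr0.
by rewrite expr0n (negbTE f0) mul0rn oppr0 mul0r.
Qed.

Definition off_last (v : vec) := [exists j, (j != ord_max) && (v 0 j != 0)].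

Definition scale_last (mu : F) (v : vec) : vec :=
  \row_i (if (i == ord_max) && off_last v then mu * v 0 i else v 0 i).

Lemma scale_last_nmax mu v j : j != ord_max -> scale_last mu v 0 j = v 0 j.
Proof. by move=> /negbTE jm; rewrite /scale_last mxE jm. Qed.

Lemma off_last_scale mu v : off_last (scale_last mu v) = off_last v.
Proof.
apply: eq_existsb => j; case: (boolP (j == ord_max)) => //= jm.
by rewrite scale_last_nmax.
Qed.

Lemma scale_lastK mu : mu != 0 -> cancel (scale_last mu) (scale_last mu^-1).
Proof.
move=> mu0 v; apply/rowP => i; rewrite {1}/scale_last mxE off_last_scale.
case: (boolP (i == ord_max)) => [/eqP ->|im] /=; last exact: scale_last_nmax.
rewrite /scale_last mxE eqxx.
by case: (off_last v) => //=; rewrite mulrA mulVf // mul1r.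
Qed.

Lemma scale_last_proj mu v : v \in reps -> scale_last mu v \in reps.
Proof.
move=> vr; case: (boolP (off_last v)) => vo; last first.
  suff -> : scale_last mu v = v by [].
  by apply/rowP => i; rewrite mxE (negbTE vo) andbF.
case/proj_point_lead: vr => s /andP[vs /forall_inP Ls] v1.
have sm : (s < n)%N.
  case/existsP: vo => j /andP[/ord_neq_max_lt jn vj]; apply: leq_trans jn.
  by rewrite ltnNge; apply: contra vj => /Ls.
have nmax (i : 'I_n.+1) : (i <= s)%N -> i != ord_max.
  by move=> le_is; rewrite neq_ltn (leq_ltn_trans le_is sm).
rewrite proj_pointsP; apply/existsP; exists s.
rewrite /is_lead !scale_last_nmax ?nmax // vs v1 eqxx andbT.
apply/forall_inP => j js; rewrite scale_last_nmax ?nmax ?Ls // ltnW //.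
Qed.

Lemma scale_last_projE mu v : mu != 0 -> (scale_last mu v \in reps) = (v \in reps).
Proof.
move=> mu0; apply/idP/idP; last exact: scale_last_proj.
by move/(scale_last_proj mu^-1); rewrite scale_lastK.
Qed.

Definition last_point : vec := delta_mx 0 ord_max.

Lemma proj_off_lastN v : (v \in reps) && ~~ off_last v = (v == last_point).
Proof.
apply/idP/eqP => [/andP[/proj_point_lead [s /andP[vs _] v1] vo]|->].
  have v0 j : j != ord_max -> v 0 j = 0.
    by move=> jm; apply/eqP; apply: contraNT vo => vj; apply/existsP; exists j; rewrite jm.
  have sm : s = ord_max by apply/eqP; apply: contraR vs => /v0 ->; rewrite eqxx.
  apply/rowP => i; rewrite mxE /=; case: eqP => [->|/eqP im]; first by rewrite -sm v1.
  by rewrite v0.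
apply/andP; split.
  rewrite proj_pointsP; apply/existsP; exists ord_max.
  rewrite /is_lead /last_point !mxE !eqxx oner_neq0 /= andbT.
  apply/forallP => j; apply/implyP => jm; rewrite mxE /=.
  by have /negbTE -> : j != ord_max by rewrite neq_ltn jm.
rewrite negb_exists; apply/forallP => j; rewrite negb_and negbK.
case: (boolP (j == ord_max)) => //= jm.
by rewrite negbK mxE (negbTE jm) andbF.
Qed.

(* Rescaling the last coordinate of the points off last_point permutes them. *)
Lemma sum_proj_last_pow e : (0 < e)%N -> (e < q - 1)%N ->
  \sum_(x in reps) x 0 ord_max ^+ e = 1.
Proof.
move=> e0 eq; have [mu mu0 mue] := exists_nonroot_pow e0 eq.
set g := fun x : vec => x 0 ord_max ^+ e.
set S := \sum_(x in reps | off_last x) g x.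
have S_eq : S = mu ^+ e * S.
  rewrite {1}/S (reindex_inj (can_inj (scale_lastK mu0))) /= mulr_sumr.
  apply: eq_big => x; first by rewrite scale_last_projE // off_last_scale.
  by rewrite off_last_scale => /andP[_ xo]; rewrite /g mxE eqxx xo exprMn.
have S0 : S = 0.
  move/eqP: S_eq; rewrite -subr_eq0 -{1}[S]mul1r -mulrBl mulf_eq0 subr_eq0.
  by rewrite eq_sym (negbTE mue) => /eqP.
rewrite (bigID off_last) /= -/S S0 add0r (big_pred1 last_point) => [|x].
  by rewrite /g mxE !eqxx expr1n.
by rewrite /= proj_off_lastN.
Qed.

Lemma all_ones_expand : mv (fun _ => 0%N) =
  \sum_(f | f != ffun_max) - indicator_coef 0 f *: mv (indicator_exps f).
Proof.
apply/rowP => x; rewrite summxE !mxE.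
have := indicator_expand 0 (pt x); rewrite (negbTE (proj_point_neq0 (point_proj x))).
have mono1 c : c =1 (fun _ => 0%N) -> mono c (pt x) = 1.
  by move=> c0; rewrite /mono big1 // => i _; rewrite c0 expr0.
rewrite (bigD1 (ffun_max)) //= indicator_coef_max !mono1 //; last exact: indicator_exps_max.
move/eqP; rewrite eq_sym mul1r addr_eq0 => /eqP ->; rewrite -sumrN.
by apply: eq_bigr => f _; rewrite !mxE mulNr.
Qed.

End Indicators.

Section MonomialBasis.
Variables (F : finFieldType) (n l : nat).
Local Notation q := #|F|.
Local Notation mv := (@mono_vec F n).
Local Notation tup := ((n.+1).-tuple 'I_l.+1).

Definition exps_l := [set t : tup | (\sum_(i <- t) (i : nat))%N == l].

Lemma card_exps_l : #|exps_l| = 'C(n + l, l).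
Proof. by rewrite card_ord_partitions -[in RHS]bin_sub ?leq_addl // addnK. Qed.

Definition tmnm (t : tup) : 'X_{1..n.+1} := [multinom (tnth t i : nat) | i < n.+1].

Lemma tmnmE t i : tmnm t i = tnth t i.
Proof. by rewrite mnmE. Qed.

Lemma mdeg_tmnm t : t \in exps_l -> mdeg (tmnm t) = l.
Proof.
rewrite inE => /eqP <-; rewrite mdegE [RHS]big_tuple.
by apply: eq_bigr => i _; rewrite tmnmE.
Qed.

Lemma tmnm_inj : injective tmnm.
Proof.
move=> s t /mnmP st; apply: eq_from_tnth => i; apply: val_inj.
by have := st i; rewrite !tmnmE.
Qed.

Lemma mnm_le_mdeg (m : 'X_{1..n.+1}) i : (m i <= mdeg m)%N.
Proof. by rewrite mdegE (bigD1 i) //= leq_addr. Qed.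

Lemma tmnm_surj (m : 'X_{1..n.+1}) : mdeg m = l -> exists2 t, t \in exps_l & tmnm t = m.
Proof.
move=> ml; pose t : tup := [tuple inord (m i) | i < n.+1].
have tm : tmnm t = m.
  apply/mnmP => i; rewrite tmnmE tnth_mktuple inordK //.
  by rewrite ltnS -ml mnm_le_mdeg.
exists t => //; rewrite inE big_tuple; apply/eqP; rewrite -[in RHS]ml mdegE.
by apply: eq_bigr => i _; rewrite -tmnmE tm.
Qed.

Definition mono_basis := [seq mv (tmnm t) | t <- enum exps_l].

Lemma tmnm_in_PRM t : t \in exps_l -> mv (tmnm t) \in PRM F n l.
Proof.
move=> tl; apply/PRMP; exists 'X_[tmnm t]; last exact: eval_vecX.
by rewrite dhomogX; apply/eqP; apply: mdeg_tmnm.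
Qed.

Lemma PRM_l_span : PRM F n l = <<mono_basis>>%VS.
Proof.
apply/vspaceP => c; apply/idP/idP.
  case/PRMP => P hP <-; rewrite {1}(mpolyE P) (big_morph _ (@eval_vecD F n) (@eval_vec0 F n)).
  rewrite big_seq; apply: memv_suml => m mP; rewrite eval_vecZ eval_vecX.
  have [t tl <-] := tmnm_surj (dhomog_mf hP mP).
  by apply/memvZ/memv_span/map_f; rewrite mem_enum.
move: c; apply/subvP/span_subvP => x /mapP [t].
by rewrite mem_enum => tl ->; apply: tmnm_in_PRM.
Qed.

Definition co_exps (c : 'I_n.+1 -> nat) i := (q - 1 - c i)%N.

Lemma sum_co_exps c : (forall i, c i <= q - 1)%N ->
  (\sum_i co_exps c i + \sum_i c i = n.+1 * (q - 1))%N.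
Proof.
move=> cle; have -> : (n.+1 * (q - 1) = \sum_(i < n.+1) (q - 1))%N.
  by rewrite sum_nat_const card_ord.
by rewrite -big_split /=; apply: eq_bigr => i _; rewrite /co_exps subnK.
Qed.

Definition co_span := <<[seq mv (co_exps (tmnm t)) | t <- enum exps_l]>>%VS.

Lemma mono_vec_in_co_span c : (forall i, c i <= q - 1)%N ->
  (l + \sum_i c i = n.+1 * (q - 1))%N -> mv c \in co_span.
Proof.
move=> cle deg_c; pose m := [multinom co_exps c i | i < n.+1].
have md : mdeg m = l.
  move: deg_c; rewrite -(sum_co_exps cle) mdegE => /addIn ->.
  by apply: eq_bigr => i _; rewrite mnmE.
have [t tl tm] := tmnm_surj md.
rewrite (@eq_mono_vec _ _ _ (co_exps (tmnm t))) => [|i]; last first.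
  by rewrite tm /co_exps mnmE subKn.
by apply/memv_span/map_f; rewrite mem_enum.
Qed.

Definition top_exps : tup := [tuple (if i == ord_max then inord l else ord0) | i < n.+1].

Lemma tmnm_top i : tmnm top_exps i = if i == ord_max then l else 0%N.
Proof. by rewrite tmnmE tnth_mktuple; case: eqP => // _; rewrite inordK. Qed.

Lemma top_exps_in : top_exps \in exps_l.
Proof.
rewrite inE big_tuple (bigD1 ord_max) //= big1 => [|i /negbTE ni]; last first.
  by rewrite tnth_mktuple ni.
by rewrite tnth_mktuple eqxx inordK // addn0.
Qed.

Lemma exists_exp_below_last t : t \in exps_l -> t != top_exps ->
  exists2 j : 'I_n.+1, (j < n)%N & (0 < tmnm t j)%N.
Proof.
move=> tl ntop; apply/exists_inP; apply: contraNT ntop.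
rewrite negb_exists_in => /forall_inP t0.
have tj0 j : j != ord_max -> tmnm t j = 0%N.
  by move=> /ord_neq_max_lt jn; apply/eqP; rewrite -leqn0 leqNgt; apply: t0.
apply/eqP/tmnm_inj/mnmP => i; rewrite tmnm_top; case: eqP => [->|/eqP /tj0 //].
by have := mdeg_tmnm tl; rewrite mdegE (bigD1 ord_max) //= big1 ?addn0.
Qed.

Hypothesis l_lt : (l < q - 1)%N.

Lemma tmnm_lt t i : t \in exps_l -> (tmnm t i < q - 1)%N.
Proof. by move=> tl; apply: leq_ltn_trans l_lt; rewrite -(mdeg_tmnm tl) mnm_le_mdeg. Qed.

(* Pairing x^s with x^(q - 1 - t): the exponent sum has degree (n + 1)(q - 1),
   and some coordinate exponent is not a positive multiple of q - 1 unless s = t. *)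
Lemma dotp_tmnm_co s t : s \in exps_l -> t \in exps_l ->
  dotp (mv (tmnm s)) (mv (co_exps (tmnm t))) = if s == t then (-1) ^+ n else 0.
Proof.
move=> sl tl; have tle i : (tmnm t i <= q - 1)%N by apply/ltnW/tmnm_lt.
have deg_st : (\sum_i (tmnm s i + co_exps (tmnm t) i) = n.+1 * (q - 1))%N.
  rewrite big_split /= addnC -(sum_co_exps tle) -!mdegE.
  by rewrite (mdeg_tmnm sl) (mdeg_tmnm tl).
rewrite dotp_mono_vec sum_proj_mono ?deg_st ?dvdn_mull ?muln_gt0 ?card_sub1_gt0 //.
case: eqP => [<-|/eqP st].
  rewrite (eq_bigr (fun _ => -1)) => [|i _]; last first.
    by rewrite /co_exps subnKC ?power_sumE ?dvdnn ?card_sub1_gt0 // ltnW ?tmnm_lt.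
  by rewrite prodr_const card_ord exprS mulN1r opprK.
have [i si] : exists i, tmnm s i != tmnm t i.
  apply/existsP; apply: contraR st; rewrite negb_exists => /forallP st.
  by apply/eqP/tmnm_inj/mnmP => i; apply/eqP/negPn.
rewrite (bigD1 i) //= power_sumE /co_exps.
have := tmnm_lt i tl; have := tmnm_lt i sl.
case: (ltngtP (tmnm s i) (tmnm t i)) si => // h _ sq tq.
  rewrite gtnNdvd ?andbF ?mul0r ?oppr0 //; lia.
rewrite (_ : (tmnm s i + (q - 1 - tmnm t i) = (tmnm s i - tmnm t i) + (q - 1))%N).
  by rewrite dvdn_addl ?dvdnn // gtnNdvd ?andbF ?mul0r ?oppr0 //; lia.
lia.
Qed.

Lemma free_mono_basis : free mono_basis.
Proof.
apply/(@freeP _ _ _ (in_tuple mono_basis)) => a a0 j.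
have sz : size mono_basis = size (enum exps_l) by rewrite size_map.
pose t0 : tup := [tuple ord0 | _ < n.+1].
pose tn (i : 'I_(size mono_basis)) := nth t0 (enum exps_l) i.
have tnl i : tn i \in exps_l by rewrite -mem_enum /tn mem_nth // -sz.
have basis_nth (i : 'I_(size mono_basis)) : mono_basis`_i = mv (tmnm (tn i)).
  by rewrite (nth_map t0) // -sz.
have := congr1 (fun x => dotp x (mv (co_exps (tmnm (tn j))))) a0; rewrite /= dotp_suml.
rewrite (eq_bigr (fun i => a i * (if i == j then (-1) ^+ n else 0))) => [|i _]; last first.
  by rewrite basis_nth dotp_tmnm_co // /tn nth_uniq ?enum_uniq // -sz.
rewrite (bigD1 j) //= eqxx big1 => [|i /negbTE ->]; last by rewrite mulr0.
rewrite addr0 /dotp big1 => [|i _]; last by rewrite mxE mul0r.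
by move/eqP; rewrite mulf_eq0 signr_eq0 orbF => /eqP.
Qed.

Lemma dim_PRM_small : \dim (PRM F n l) = 'C(n + l, l).
Proof. by rewrite PRM_l_span (eqP free_mono_basis) size_map -cardE card_exps_l. Qed.

End MonomialBasis.

Section HullDimension.
Variables (F : finFieldType) (n k l : nat).
Local Notation q := #|F|.
Local Notation N := (Npts F n).
Local Notation mv := (@mono_vec F n).
Local Notation pt := (@point F n).
Local Notation exps_l := (exps_l n l).
Local Notation top_exps := (top_exps n l).
Local Notation co_span := (co_span F n l).
Local Notation mono_basis := (mono_basis F n l).

Hypothesis kl_sum : (k + l = n * (q - 1))%N.
Hypothesis l_small : (2 * l < q - 1)%N.

Let l_lt : (l < q - 1)%N.
Proof. by apply: leq_ltn_trans l_small; rewrite leq_pmull. Qed.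

(* x^t vanishes where x_j does, and the lead indicator of degree k - l equals
   1 where x_j does not. *)
Lemma tmnm_in_PRM_k t : t \in exps_l -> t != top_exps -> mv (tmnm t) \in PRM F n k.
Proof.
move=> tl ntop; have [j jn tj] := exists_exp_below_last tl ntop.
pose e := (k - l - j * (q - 1))%N.
have jq : (j.+1 * (q - 1) <= n * (q - 1))%N by rewrite leq_mul2r jn orbT.
have e_gt0 : (0 < e)%N by move: kl_sum l_small; rewrite /e; nia.
have ke : k = (l + (e + j * (q - 1)))%N by move: kl_sum l_small; rewrite /e; nia.
apply/PRMP; exists ('X_[tmnm t] * lead_indicator F j e).
  rewrite ke; apply: dhomogM; last exact: lead_indicator_homog.
  by rewrite dhomogX; apply/eqP; apply: mdeg_tmnm.
apply/rowP => i; rewrite !mxE mevalM mevalX -/(mono (tmnm t) (pt i)).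
have [Pj0|Pj] := eqVneq (pt i 0 j) 0; first by rewrite (mono_eq0 tj Pj0) mul0r.
by rewrite lead_indicator_eval ?point_proj // mulr1.
Qed.

(* A monomial of degree s congruent to -l lies in C_{n,k} if s <= k, and
   otherwise s = (n + 1)(q - 1) - l, so it is complementary to one of degree l. *)
Lemma mono_vec_in_PRM_co_span c : (forall i, c i <= q - 1)%N ->
  (q - 1 %| l + \sum_i c i)%N -> (0 < \sum_i c i)%N ->
  mv c \in (PRM F n k + co_span)%VS.
Proof.
move=> cle dv c0; set s := (\sum_i c i)%N.
have q1 := card_sub1_gt0 F.
have [sk|ks] := leqP s k.
  apply: (subvP (addvSl _ _)).
  move: c0; rewrite lt0n sum_nat_eq0 negb_forall => /existsP[j]; rewrite implyTb -lt0n.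
  move=> cj; apply: mono_vec_lift_in_PRM cj sk _.
  have -> : (k - s = n * (q - 1) - (l + s))%N by rewrite -kl_sum; lia.
  by rewrite dvdn_sub // dvdn_mull.
apply/(subvP (addvSr _ _))/mono_vec_in_co_span => //.
have sle : (s <= n.+1 * (q - 1))%N.
  by rewrite -[X in (_ <= X * _)%N]card_ord -sum_nat_const; apply: leq_sum => i _.
have := divnK dv; set r := ((l + s) %/ (q - 1))%N => rq.
have h1 : (n * (q - 1) < r * (q - 1))%N by rewrite rq -kl_sum; lia.
have h2 : (r * (q - 1) < n.+2 * (q - 1))%N by rewrite rq; have := l_lt; rewrite !mulSn; lia.
rewrite ltn_pmul2r // in h1; rewrite ltn_pmul2r // in h2.
by rewrite -rq; congr (_ * _)%N; lia.
Qed.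

(* In degree 0 (so l = 0) the all-ones vector is a combination of monomials of
   positive degree divisible by q - 1. *)
Lemma mono_vec_congr_in_PRM_co_span c : (forall i, c i <= q - 1)%N ->
  (q - 1 %| l + \sum_i c i)%N -> mv c \in (PRM F n k + co_span)%VS.
Proof.
move=> cle dv; have [c0|] := posnP (\sum_i c i); last exact: mono_vec_in_PRM_co_span.
have l0 : l = 0%N.
  by move: dv; rewrite c0 addn0; apply: contraTeq; rewrite -lt0n => /gtnNdvd ->; rewrite ?l_lt.
have -> : mv c = mv (fun _ => 0%N).
  apply: eq_mono_vec => i; apply/eqP; move/eqP: c0.
  by rewrite sum_nat_eq0 => /forallP /(_ i).
rewrite all_ones_expand; apply: memv_suml => f f_top.
have [->|Cf] := eqVneq (indicator_coef 0 f) 0; first by rewrite oppr0 scale0r mem0v.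
have f_supp i := indicator_coef0_support i Cf.
apply/memvZ/mono_vec_in_PRM_co_span => [i||]; first exact: indicator_exps_le.
  rewrite l0 add0n; apply: dvdn_sum => i _; rewrite /indicator_exps.
  by case/orP: (f_supp i) => /eqP ->; rewrite ?subnS ?subnn ?subn0.
have [i fi] : exists i, f i != ord_max.
  apply/existsP; apply: contraR f_top; rewrite negb_exists => /forallP ftop.
  by apply/eqP/ffunP => i; rewrite ffunE; apply/eqP/negPn.
have /eqP fi0 : f i == 0 :> nat by move: (f_supp i); rewrite (negbTE fi).
by rewrite (bigD1 i) //= /indicator_exps fi0 subn0 addn_gt0 card_sub1_gt0.
Qed.

Lemma PRM_add_co_span_full : (fullv <= PRM F n k + co_span)%VS.
Proof.
apply/subvP => u _; rewrite (row_sum_delta u); apply: memv_suml => i0 _.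
apply: memvZ; rewrite [delta_mx _ _](_ : _ = \sum_f
   (indicator_coef (pt i0) f *
    (if (q - 1 %| l + \sum_i indicator_exps f i)%N then -1 else 0)) *:
   mv (indicator_exps f)).
  apply: memv_suml => f _; case: ifP => dv; last by rewrite mulr0 scale0r mem0v.
  by apply/memvZ/mono_vec_congr_in_PRM_co_span => // i; apply: indicator_exps_le.
apply/rowP => i; rewrite summxE !mxE eqxx /=.
transitivity ((pt i == pt i0)%:R : F); first by rewrite (inj_eq enum_val_inj).
rewrite (proj_indicator_expand l (point_proj i0) (point_proj i)).
by apply: eq_bigr => f _; rewrite !mxE.
Qed.

Lemma dotp_top : dotp (mv (tmnm top_exps)) (mv (tmnm top_exps)) = 1.
Proof.
rewrite dotp_mono_vec.
have mono_top x : mono (fun i => tmnm top_exps i + tmnm top_exps i)%N x =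
                  x 0 ord_max ^+ (l + l).
  rewrite /mono (bigD1 ord_max) //= big1 ?mulr1 ?tmnm_top ?eqxx // => i /negbTE im.
  by rewrite tmnm_top im expr0.
under eq_bigr do rewrite mono_top.
have [l0|l_gt0] := posnP l.
  rewrite l0 (eq_bigr (fun _ => 1)) => [|x _]; last exact: expr0.
  by rewrite sumr_const natr_card_proj.
by apply: sum_proj_last_pow; rewrite ?addn_gt0 ?l_gt0 // addnn -mul2n.
Qed.

Lemma dim_dual_PRM_le : (\dim (dual_code (PRM F n k)) <= 'C(n + l, l))%N.
Proof.
have le_N : (N <= \dim (PRM F n k) + 'C(n + l, l))%N.
  have := dimvS PRM_add_co_span_full; rewrite dimvf /dim /= mul1n => /leq_trans; apply.
  apply: leq_trans (dimv_add_leqif _ _).1 _; rewrite leq_add2l.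
  by apply: leq_trans (dim_span _) _; rewrite size_map -cardE card_exps_l.
have := dim_dual_code (PRM F n k); lia.
Qed.

Hypothesis n_gt0 : (0 < n)%N.

Lemma PRM_l_sub_dual : (PRM F n l <= dual_code (PRM F n k))%VS.
Proof.
apply/subvP => u /PRMP [Q hQ <-]; apply/dual_codeP => c /PRMP [P hP <-].
exact: (dotp_eval_homog_eq0 n_gt0 hP hQ kl_sum).
Qed.

Lemma dim_hull_lt_dual : (\dim (hull (PRM F n k)) < \dim (dual_code (PRM F n k)))%N.
Proof.
set w := mv (tmnm top_exps).
have wD : w \in dual_code (PRM F n k) by apply/(subvP PRM_l_sub_dual)/tmnm_in_PRM/top_exps_in.
rewrite (ltn_leqif (dimv_leqif_sup (capvSr _ _))); apply/negP => /subvP /(_ w wD).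
rewrite memv_cap => /andP[wS /dual_codeP /(_ w wS)].
by rewrite dotp_top => /eqP; rewrite oner_eq0.
Qed.

Lemma dim_hull_ge : ('C(n + l, l) - 1 <= \dim (hull (PRM F n k)))%N.
Proof.
set w := mv (tmnm top_exps).
set B := filter (predC1 w) mono_basis.
have free_B : free B by apply/filter_free/free_mono_basis.
have size_B : size B = ('C(n + l, l) - 1)%N.
  have := count_predC (pred1 w) mono_basis.
  rewrite count_uniq_mem ?free_uniq ?free_mono_basis // size_filter.
  rewrite (map_f _ (_ : top_exps \in enum exps_l)) ?mem_enum ?top_exps_in //.
  by rewrite size_map -cardE card_exps_l => <-; rewrite add1n subSS subn0.
rewrite -size_B -(eqP free_B); apply/dimvS/span_subvP => x.
rewrite mem_filter => /andP[/= xw /mapP [t]]; rewrite mem_enum => tl xt.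
rewrite memv_cap (subvP PRM_l_sub_dual) ?xt ?tmnm_in_PRM // andbT.
by apply: tmnm_in_PRM_k => //; apply: contraNneq xw => tt; rewrite xt tt.
Qed.

Lemma dim_hull_PRM : \dim (hull (PRM F n k)) = ('C(n + l, l) - 1)%N.
Proof.
apply/eqP; rewrite eqn_leq dim_hull_ge andbT.
have := leq_trans dim_hull_lt_dual dim_dual_PRM_le; lia.
Qed.

End HullDimension.

Theorem mainTheorem9 (F : finFieldType) (n k : nat) :
  let q := #|F| in
  (1 <= n)%N ->
  (2 * (n * (q - 1)) - (q - 1) < 2 * k)%N ->
  (k <= n * (q - 1))%N ->
  let l := (n * (q - 1) - k)%N in
  \dim (hull (PRM F n k)) = (\dim (PRM F n l) - 1)%N /\
  (\dim (PRM F n l) - 1)%N = ('C(n + l, l) - 1)%N.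
Proof.
move=> q n_gt0 k_gt k_le l.
have kl_sum : (k + l = n * (q - 1))%N by rewrite /l subnKC.
have l_small : (2 * l < q - 1)%N by rewrite /l; lia.
have l_lt : (l < q - 1)%N by lia.
by rewrite (dim_hull_PRM kl_sum l_small n_gt0) (dim_PRM_small n l_lt).
Qed.
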